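(* Let $(X,\delta,c)$ be an accepting automaton over $\Sigma$ and let $\mu\mathrm{PL}(\delta,c)$ be as in the context. Then $\mu\mathrm{PL}(\delta,c)$ is isomorphic to the smallest preformation of languages containing $\{L(x,c)\mid x\in X\}$, where $L(x,c)=\{u\in\Sigma^\ast\mid\delta(x)(u)\in c\}$; that is, the set $\{L(\mathcal{U})\mid\mathcal{U}\in P(\Sigma^\ast/{\approx})\}$ is the smallest preformation of languages containing all $L(x,c)$, $x\in X$.
   Context: $\Sigma$ is a finite alphabet, $\Sigma^\ast$ the free monoid with empty word $\epsilon$, $u^r$ the reversal of $u$. An accepting automaton is $(X,\delta,c)$ with $\delta:X\to X^\Sigma$ (extended to words by $\delta(x)(\epsilon)=x$, $\delta(x)(wa)=\delta(\delta(x)(w))(a)$) and $c\subseteq X$. Define $\widehat{\delta}(U)(a)=\{x\mid\delta(x)(a)\in U\}$ for $U\subseteq X$, extended to words, so $\widehat{\delta}(U)(w)=\{x\mid\delta(x)(w^r)\in U\}$. Let $\langle c\rangle=\{\widehat{\delta}(c)(w)\mid w\in\Sigma^\ast\}$ and $u\approx v$ iff $\widehat{\delta}(U)(u)=\widehat{\delta}(U)(v)$ for all $U\in\langle c\rangle$. $\mu\mathrm{PL}(\delta,c)$ has state space $P(\Sigma^\ast/{\approx})$, transition $\widehat{\sigma}(\mathcal{U})(u)=\{[w]\mid[wu^r]\in\mathcal{U}\}$ and final states $\{\mathcal{U}\mid[\epsilon]\in\mathcal{U}\}$; $L(\mathcal{U})=\{u\mid[\epsilon]\in\widehat{\sigma}(\mathcal{U})(u)\}$.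 A preformation of languages is a complete atomic Boolean subalgebra of $2^{\Sigma^\ast}$ closed under left derivatives $U\mapsto\{w\mid aw\in U\}$ and right derivatives $U\mapsto\{w\mid wa\in U\}$, $a\in\Sigma$. *)

From mathcomp Require Import all_boot.
From mathcomp Require Import boolp classical_sets.
Set Implicit Arguments. Unset Strict Implicit. Unset Printing Implicit Defensive.
Local Open Scope classical_set_scope.

Section Automata.
Variables (A : finType) (X : Type) (delta : X -> A -> X) (c : set X).

Definition delta_star (x : X) (w : seq A) : X := foldl delta x w.

Definition deltahat1 (U : set X) (a : A) : set X := [set x | U (delta x a)].

Definition deltahat (U : set X) (w : seq A) : set X := foldl deltahat1 U w.

Definition gen_c : set (set X) := [set V | exists w, V = deltahat c w].

Definition approx (u v : seq A) : Prop :=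
  forall U, gen_c U -> deltahat U u = deltahat U v.

Definition cls (w : seq A) : set (seq A) := [set v | approx w v].

Definition quot : set (set (seq A)) := [set C | exists w, C = cls w].

(* states of muPL(delta,c): subsets 𝒰 of Sigma^*/~, i.e. 𝒰 `<=` quot *)
Definition sigmahat (U : set (set (seq A))) (u : seq A) : set (set (seq A)) :=
  [set C | exists w, C = cls w /\ U (cls (w ++ rev u))].

Definition LU (U : set (set (seq A))) : set (seq A) :=
  [set u | sigmahat U u (cls [::])].

Definition Lxc (x : X) : set (seq A) := [set u | c (delta_star x u)].

End Automata.

Definition preformation (A : Type) (F : set (set (seq A))) : Prop :=
  [/\
      (forall U, F U -> F (~` U)),
      (forall G : set (set (seq A)), G `<=` F -> F (\bigcup_(U in G) U)),
      (forall G : set (set (seq A)), G `<=` F -> F (\bigcap_(U in G) U)),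
      (forall U, F U -> U <> set0 ->
         exists a, [/\ F a, a <> set0, a `<=` U &
                      forall b, F b -> b `<=` a -> b = set0 \/ b = a]) &
      (forall U (a : A), F U ->
         F [set w | U (a :: w)] /\ F [set w | U (rcons w a)])].

From mathcomp Require Import all_boot.
From mathcomp Require Import boolp classical_sets.
Local Open Scope classical_set_scope.

(* For a family of languages closed under left derivatives, call u and v
   equivalent when no language of the family and no right context z tells
   u z from v z.  This equivalence is a two-sided congruence, so the languages
   saturated by it (the unions of its classes) form a preformation, whose atoms
   are the classes.  Conversely every class is an intersection of right
   quotients of the given languages and of their complements, so any
   preformation containing the family contains all saturated languages.
   For the languages L(x,c) of an automaton the congruence is, up to reversal
   of words, the relation ~ of muPL(delta,c), and L(U) is the saturated
   language whose classes are the reversals of the members of U. *)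

Set Implicit Arguments.
Unset Strict Implicit.

Section SaturatedLanguages.
Variables (A : Type) (Ls : set (set (seq A))).
Hypothesis Ls_lderiv : forall L a, Ls L -> Ls [set w | L (a :: w)].

Definition ctx_equiv (u v : seq A) : Prop :=
  forall L z, Ls L -> (L (u ++ z) <-> L (v ++ z)).

Definition saturated (L : set (seq A)) : Prop :=
  forall u v, ctx_equiv u v -> L u -> L v.

Definition rquot (L : set (seq A)) (z : seq A) : set (seq A) :=
  [set v | L (v ++ z)].

Lemma ctx_equiv_refl u : ctx_equiv u u.
Proof. by move=> L z _; split. Qed.

Lemma ctx_equiv_sym u v : ctx_equiv u v -> ctx_equiv v u.
Proof. by move=> uv L z LsL; apply: iff_sym (uv L z LsL). Qed.

Lemma ctx_equiv_trans u v w : ctx_equiv u v -> ctx_equiv v w -> ctx_equiv u w.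
Proof. by move=> uv vw L z LsL; apply: iff_trans (uv _ _ LsL) (vw _ _ LsL). Qed.

Lemma ctx_equiv_cons a u v : ctx_equiv u v -> ctx_equiv (a :: u) (a :: v).
Proof. by move=> uv L z /(Ls_lderiv a) LsaL; apply: (uv _ z LsaL). Qed.

Lemma ctx_equiv_catl p u v : ctx_equiv u v -> ctx_equiv (p ++ u) (p ++ v).
Proof. by elim: p => [|a p IHp] //= uv; apply: ctx_equiv_cons; apply: IHp. Qed.

Lemma ctx_equiv_rcons a u v : ctx_equiv u v -> ctx_equiv (rcons u a) (rcons v a).
Proof. by move=> uv L z LsL; rewrite !cat_rcons; apply: uv. Qed.

Lemma saturated_Ls L : Ls L -> saturated L.
Proof. by move=> LsL u v /(_ L [::] LsL); rewrite !cats0 => -[]. Qed.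

Lemma saturated_class u : saturated (ctx_equiv u).
Proof. by move=> v w vw uv; apply: ctx_equiv_trans uv vw. Qed.

Lemma saturated_atom L : saturated L -> L <> set0 ->
  exists a, [/\ saturated a, a <> set0, a `<=` L &
              forall b, saturated b -> b `<=` a -> b = set0 \/ b = a].
Proof.
move=> satL /eqP/set0P[u Lu]; exists (ctx_equiv u); split.
- exact: saturated_class.
- by move/(congr1 (@^~ u)) => /= <-; apply: ctx_equiv_refl.
- by move=> v uv; apply: satL uv Lu.
move=> b satb ba; have [->|/eqP/set0P[v bv]] := pselect (b = set0); [by left|right].
apply/seteqP; split=> // w uw; apply: (satb v w _ bv).
exact: ctx_equiv_trans (ctx_equiv_sym (ba v bv)) uw.
Qed.

Lemma preformation_saturated : preformation saturated.
Proof.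
split.
- by move=> L satL u v uv nLu Lv; apply/nLu/(satL v u (ctx_equiv_sym uv)).
- by move=> G satG u v uv [K GK Ku]; exists K => //; apply: satG GK _ _ uv Ku.
- by move=> G satG u v uv GLu K GK; apply: satG GK _ _ uv (GLu K GK).
- exact: saturated_atom.
move=> L a satL; split=> u v uv /=; apply: satL.
  exact: ctx_equiv_cons.
exact: ctx_equiv_rcons.
Qed.

Section MinimalPreformation.
Variable F : set (set (seq A)).
Hypotheses (preF : preformation F) (Ls_F : Ls `<=` F).

Lemma preformation_rquot L z : F L -> F (rquot L z).
Proof.
case: preF => _ _ _ _ derivF; elim: z => [|a z IHz].
  by rewrite /rquot; under eq_set do rewrite cats0.
have -> : rquot L (a :: z) = [set w | rquot L z (rcons w a)].
  by apply/seteqP; split=> w; rewrite /rquot /= cat_rcons.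
by move=> FL; apply: (derivF _ a (IHz FL)).2.
Qed.

(* The class of u is cut out by the constraints "v z in L" or "v z notin L"
   that u satisfies. *)
Lemma preformation_class u : F (ctx_equiv u).
Proof.
pose G := [set K | exists L z, Ls L /\
  (K = rquot L z /\ L (u ++ z) \/ K = ~` rquot L z /\ ~ L (u ++ z))].
have -> : ctx_equiv u = \bigcap_(K in G) K.
  apply/seteqP; split=> [v uv K [L [z [LsL [[-> Luz]|[-> nLuz]]]]]|v Gv L z LsL].
  - exact/(uv _ _ LsL).
  - by move=> /(uv _ _ LsL).
  have [Luz|nLuz] := pselect (L (u ++ z)).
    by split=> // _; apply: (Gv (rquot L z)); exists L, z; split=> //; left.
  split=> // Lvz; have /(_ Lvz) // : (~` rquot L z) v.
  by apply: Gv; exists L, z; split=> //; right.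
case: preF => complF _ capF _ _; apply: capF => K [L [z [LsL [[-> _]|[-> _]]]]].
  exact/preformation_rquot/Ls_F.
exact/complF/preformation_rquot/Ls_F.
Qed.

Lemma saturated_sub_preformation : saturated `<=` F.
Proof.
move=> L satL; have -> : L = \bigcup_(K in ctx_equiv @` L) K.
  apply/seteqP; split=> [u Lu|v [_ [u Lu <-] uv]]; last exact: satL uv Lu.
  by exists (ctx_equiv u); [exists u | apply: ctx_equiv_refl].
case: preF => _ cupF _ _ _; apply: cupF => _ [u _ <-].
exact: preformation_class.
Qed.

End MinimalPreformation.
End SaturatedLanguages.

Section AutomatonLanguages.
Variables (A : finType) (X : Type) (delta : X -> A -> X) (c : set X).

Let Ls : set (set (seq A)) := range (Lxc delta c).

Lemma Lxc_lderiv L a : Ls L -> Ls [set w | L (a :: w)].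
Proof. by move=> [x _ <-]; exists (delta x a). Qed.

Lemma delta_star_cat x u v :
  delta_star delta x (u ++ v) = delta_star delta (delta_star delta x u) v.
Proof. exact: foldl_cat. Qed.

Lemma deltahatE U w :
  deltahat delta U w = [set x | U (delta_star delta x (rev w))].
Proof.
elim: w U => [|a w IHw] U //=.
rewrite /deltahat /= -/(deltahat _ _ w) IHw rev_cons -cats1.
by apply/seteqP; split=> x; rewrite /= delta_star_cat.
Qed.

Lemma approxE u v : approx delta c u v <-> ctx_equiv Ls (rev u) (rev v).
Proof.
split=> [uv _ z [x _ <-] | uv _ [w ->]]; last first.
  rewrite !deltahatE; apply/seteqP; split=> x /=; rewrite -!delta_star_cat;
    by have [] := uv _ (rev w) (imageT (Lxc delta c) x).
have /(congr1 (@^~ x)) := uv _ (ex_intro _ (rev z) erefl).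
by rewrite !deltahatE /= revK -!delta_star_cat /Lxc /= => ->.
Qed.

Lemma cls_eqE u v : cls delta c u = cls delta c v <-> ctx_equiv Ls (rev u) (rev v).
Proof.
split=> uv.
  have : cls delta c v v by apply/approxE; apply: ctx_equiv_refl.
  by rewrite -uv => /approxE.
apply/seteqP; split=> w /approxE uw; apply/approxE.
  exact: ctx_equiv_trans (ctx_equiv_sym uv) uw.
exact: ctx_equiv_trans uv uw.
Qed.

Lemma LUE U u : LU delta c U u <-> U (cls delta c (rev u)).
Proof.
split=> [[w [/esym/cls_eqE wu Uwu]] | Uu]; last by exists [::].
suff -> : cls delta c (rev u) = cls delta c (w ++ rev u) by [].
apply/cls_eqE; rewrite rev_cat !revK -[u in ctx_equiv _ u]cats0.
by apply: ctx_equiv_sym; apply: (ctx_equiv_catl Lxc_lderiv).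
Qed.

Lemma LU_saturated U : saturated Ls (LU delta c U).
Proof.
move=> u v uv /LUE Uu; apply/LUE.
suff -> : cls delta c (rev v) = cls delta c (rev u) by [].
by apply/cls_eqE; rewrite !revK; apply: ctx_equiv_sym.
Qed.

Lemma saturated_LU L : saturated Ls L ->
  L = LU delta c [set cls delta c (rev u) | u in L].
Proof.
move=> satL; apply/seteqP; split=> [u Lu | v /LUE [u Lu /cls_eqE]].
  by apply/LUE; exists u.
by rewrite !revK => uv; apply: satL uv Lu.
Qed.

Lemma LU_image_saturated :
  [set L | exists U, U `<=` quot delta c /\ L = LU delta c U] = saturated Ls.
Proof.
apply/seteqP; split=> [_ [U [_ ->]] | L /saturated_LU ->]; first exact: LU_saturated.
by eexists; split; last reflexivity; move=> _ [u _ <-]; exists (rev u).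
Qed.

End AutomatonLanguages.

Theorem mainTheorem8 (A : finType) (X : Type) (delta : X -> A -> X) (c : set X) :
  let P := [set L | exists U, U `<=` quot delta c /\ L = LU delta c U] in
  [/\ preformation P,
      (forall x : X, P (Lxc delta c x)) &
      (forall F : set (set (seq A)),
         preformation F -> (forall x : X, F (Lxc delta c x)) -> P `<=` F)].
Proof.
move=> P; rewrite /P LU_image_saturated; split.
- exact/preformation_saturated/Lxc_lderiv.
- by move=> x; apply: saturated_Ls; apply: imageT.
- by move=> F preF LxcF; apply: saturated_sub_preformation => // _ [x _ <-].
Qed.
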